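(* Let $A\in H_n$ and $B\in H_k$ be neither positive semidefinite nor negative semidefinite, with $\|A_+\|_\infty=\|B_+\|_\infty$ and $\|A_-\|_\infty=\|B_-\|_\infty$. Then there exist a positive unital linear map $\Phi:H_n\to H_k$ with $\Phi(A)=B$ and a positive unital linear map $\Phi':H_k\to H_n$ with $\Phi'(B)=A$.
   Context: $H_n$ denotes the $n\times n$ complex Hermitian matrices. A linear map $\Phi:H_n\to H_k$ is positive if it maps positive semidefinite matrices to positive semidefinite matrices and unital if $\Phi(\mathbb{1})=\mathbb{1}$. Every $A\in H_n$ decomposes uniquely as $A=A_+-A_-$ with $A_+,A_-$ positive semidefinite and $A_+A_-=0$. $\|\cdot\|_\infty$ is the operator norm. *)

From HB Require Import structures.
From mathcomp Require Import all_boot all_order all_algebra.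
From mathcomp Require Import classical_sets reals.
From mathcomp Require Import complex.
Set Implicit Arguments. Unset Strict Implicit. Unset Printing Implicit Defensive.
Import Order.TTheory GRing.Theory Num.Theory.
Local Open Scope ring_scope.

Section Defs.
Variable R : realType.
Local Notation C := (R[i]).

Definition adjmx m p (M : 'M[C]_(m, p)) : 'M[C]_(p, m) := map_mx Num.conj (M^T).

Definition is_herm n (A : 'M[C]_n) : Prop := adjmx A = A.

Definition psd n (A : 'M[C]_n) : Prop :=
  is_herm A /\ forall v : 'cV[C]_n, 0 <= (adjmx v *m A *m v) 0 0.

Definition vnorm n (v : 'cV[C]_n) : R := Num.sqrt (complex.Re ((adjmx v *m v) 0 0)).

Definition opnorm n (M : 'M[C]_n) : R :=
  sup [set vnorm (M *m v) | v in [set v : 'cV[C]_n | vnorm v = 1]]%classic.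

(* Phi : H_n -> H_k (represented by a function on all n x n matrices whose
   behaviour is only constrained on H_n) is a real-linear, positive, unital map *)
Definition pos_unital_linear n k (Phi : 'M[C]_n -> 'M[C]_k) : Prop :=
  [/\ (forall X, is_herm X -> is_herm (Phi X)),
      (forall X Y, is_herm X -> is_herm Y -> Phi (X + Y) = Phi X + Phi Y),
      (forall (a : R) X, is_herm X -> Phi ((a%:C)%C *: X) = (a%:C)%C *: Phi X),
      (forall X, psd X -> psd (Phi X)) &
      Phi 1%:M = 1%:M].
End Defs.

(* Write a = ||A_+||, b = ||A_-||.  Since A_+ and A_- are nonzero positive
   semidefinite matrices with A_+ A_- = 0, there are unit vectors u, w with
   A u = a u and A w = - b w (top eigenvectors of A_+ and A_-).  On the other
   side, ||B_+|| = a and ||B_-|| = b give a B_+ - B_+^2 >= 0 and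
   b B_- - B_-^2 >= 0, hence T := 1 - B_+/a - B_-/b >= 0.  The map
      Phi X = <u, X u> M_+ + <w, X w> M_-,
      M_+ = B_+/a + b/(a+b) T,   M_- = B_-/b + a/(a+b) T,
   is positive and unital (M_+, M_- >= 0 and M_+ + M_- = 1) and sends A to
   a M_+ - b M_- = B_+ - B_-.  The hypotheses are symmetric in A and B, so the
   same construction gives Phi'. *)
From HB Require Import structures.
From mathcomp Require Import all_boot all_order all_algebra.
From mathcomp Require Import classical_sets reals.
From mathcomp Require Import complex spectral.
From mathcomp Require Import ring.
Import Order.TTheory GRing.Theory Num.Theory.
Local Open Scope ring_scope.
Local Notation "x %:C" := (real_complex _ x) (format "x %:C").

Set Implicit Arguments. Unset Strict Implicit. Unset Printing Implicit Defensive.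

Section PositiveUnitalMaps.
Variable R : realType.
Local Notation C := (R[i]).

Lemma adjmxM m p q (A : 'M[C]_(m, p)) (B : 'M[C]_(p, q)) :
  adjmx (A *m B) = adjmx B *m adjmx A.
Proof. by rewrite /adjmx trmx_mul map_mxM. Qed.

Lemma adjmxK m p (A : 'M[C]_(m, p)) : adjmx (adjmx A) = A.
Proof. exact: trmxCK. Qed.

Lemma adjmxD m p (A B : 'M[C]_(m, p)) : adjmx (A + B) = adjmx A + adjmx B.
Proof. by rewrite /adjmx linearD /= map_mxD. Qed.

Lemma adjmxB m p (A B : 'M[C]_(m, p)) : adjmx (A - B) = adjmx A - adjmx B.
Proof. by rewrite /adjmx linearB /= map_mxB. Qed.

Lemma adjmxZ m p (c : C) (A : 'M[C]_(m, p)) :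
  adjmx (c *: A) = Num.conj c *: adjmx A.
Proof. by rewrite /adjmx linearZ /= map_mxZ. Qed.

Lemma adjmx1 n : adjmx (1%:M : 'M[C]_n) = 1%:M.
Proof. by rewrite /adjmx trmx1 map_mx1. Qed.

Lemma adjmx0 m p : adjmx (0 : 'M[C]_(m, p)) = 0.
Proof. by rewrite /adjmx trmx0 map_mx0. Qed.

Lemma conj_ge0 (c : C) : 0 <= c -> Num.conj c = c.
Proof. by move=> c0; apply/conj_Creal/ger0_real. Qed.

Lemma conj_realC (x : R) : Num.conj x%:C = x%:C.
Proof. by apply/CrealP; apply/complex_realP; exists x. Qed.

Definition ip n (a b : 'cV[C]_n) : C := (adjmx a *m b) 0 0.
Definition qf n (v : 'cV[C]_n) (M : 'M[C]_n) : C := (adjmx v *m M *m v) 0 0.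

Section InnerProduct.
Variable n : nat.
Implicit Types (a b c v : 'cV[C]_n) (M : 'M[C]_n).

Lemma ipBl a b c : ip (a - b) c = ip a c - ip b c.
Proof. by rewrite /ip adjmxB mulmxBl mxE [(- _ : 'M_(_, _)) 0 0]mxE. Qed.

Lemma ipBr a b c : ip a (b - c) = ip a b - ip a c.
Proof. by rewrite /ip mulmxBr mxE [(- _ : 'M_(_, _)) 0 0]mxE. Qed.

Lemma ipZl a b (z : C) : ip (z *: a) b = Num.conj z * ip a b.
Proof. by rewrite /ip adjmxZ -scalemxAl mxE. Qed.

Lemma ipZr a b (z : C) : ip a (z *: b) = z * ip a b.
Proof. by rewrite /ip -scalemxAr mxE. Qed.

Lemma ip0r a : ip a 0 = 0.
Proof. by rewrite /ip mulmx0 mxE. Qed.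

Lemma ipM M a b : ip (M *m a) b = ip a (adjmx M *m b).
Proof. by rewrite /ip adjmxM mulmxA. Qed.

Lemma ip_ge0 a : 0 <= ip a a.
Proof.
by rewrite /ip mxE; apply: sumr_ge0 => i _; rewrite !mxE mulrC mul_conjC_ge0.
Qed.

Lemma qf_ip v M : qf v M = ip v (M *m v).
Proof. by rewrite /qf /ip mulmxA. Qed.

Lemma qf1 v : qf v 1%:M = ip v v.
Proof. by rewrite qf_ip mul1mx. Qed.

Lemma qfD v M1 M2 : qf v (M1 + M2) = qf v M1 + qf v M2.
Proof. by rewrite /qf mulmxDr mulmxDl mxE. Qed.

Lemma qfB v M1 M2 : qf v (M1 - M2) = qf v M1 - qf v M2.
Proof. by rewrite /qf mulmxBr mulmxBl mxE [(- _ : 'M_(_, _)) 0 0]mxE. Qed.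

Lemma qfZ v (z : C) M : qf v (z *: M) = z * qf v M.
Proof. by rewrite /qf -scalemxAr -scalemxAl mxE. Qed.

(* The form of the adjoint is the conjugate form: Hermitian forms are real. *)
Lemma conj_qf v M : Num.conj (qf v M) = qf v (adjmx M).
Proof.
rewrite /qf; have -> : Num.conj ((adjmx v *m M *m v) 0 0) =
  adjmx (adjmx v *m M *m v) 0 0 by rewrite !mxE.
by rewrite !adjmxM adjmxK mulmxA.
Qed.

End InnerProduct.

Lemma psdD n (X Y : 'M[C]_n) : psd X -> psd Y -> psd (X + Y).
Proof.
move=> [hX pX] [hY pY]; split; first by rewrite /is_herm adjmxD hX hY.
by move=> v; rewrite -/(qf v _) qfD addr_ge0 //; [apply: pX | apply: pY].
Qed.

Lemma psdZ n (c : C) (X : 'M[C]_n) : 0 <= c -> psd X -> psd (c *: X).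
Proof.
move=> c0 [hX pX]; split; first by rewrite /is_herm adjmxZ hX conj_ge0.
by move=> v; rewrite -/(qf v _) qfZ mulr_ge0 //; apply: pX.
Qed.

Lemma herm_mul_eq0C n (X Y : 'M[C]_n) :
  is_herm X -> is_herm Y -> X *m Y = 0 -> Y *m X = 0.
Proof. by move=> hX hY XY; rewrite -hX -hY -adjmxM XY adjmx0. Qed.

(* Dg g is the diagonal matrix of the real vector g; eigmx P g is the
   Hermitian matrix whose eigenvectors are the columns of P^* for a unitary P,
   with real eigenvalues g. *)
Definition Dg n (g : 'rV[R]_n) : 'M[C]_n := diag_mx (map_mx (real_complex R) g).
Definition eigmx n (P : 'M[C]_n) (g : 'rV[R]_n) : 'M[C]_n := adjmx P *m Dg g *m P.

Lemma herm_eigmx n (X : 'M[C]_n) : is_herm X ->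
  exists (P : 'M[C]_n) (g : 'rV[R]_n),
    [/\ P *m adjmx P = 1%:M, adjmx P *m P = 1%:M & X = eigmx P g].
Proof.
move=> hX; have hs : X \is hermsymmx.
  by apply/is_hermitianmxP; rewrite expr0 scale1r; exact: esym hX.
have U := spectral_unitarymx X.
exists (spectralmx X), (map_mx (@complex.Re R) (spectral_diag X)); split.
- exact/unitarymxP.
- by have := mulVmx (unitarymx_unit U); rewrite invmx_unitary.
- have dE : map_mx (real_complex R) (map_mx (@complex.Re R) (spectral_diag X))
            = spectral_diag X.
    apply/matrixP => i j; rewrite !mxE RRe_real //.
    exact: (mxOverP (hermitian_spectral_diag_real hs)).
  rewrite /eigmx /Dg dE.
  have -> : adjmx (spectralmx X) = invmx (spectralmx X) by rewrite invmx_unitary.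
  exact/orthomx_spectralP/hermitian_normalmx.
Qed.

Section FunctionalCalculus.
Variables (n : nat) (P : 'M[C]_n).
Hypotheses (PPadj : P *m adjmx P = 1%:M) (PadjP : adjmx P *m P = 1%:M).
Implicit Types (f g : 'rV[R]_n).

Lemma eigmx1 : eigmx P (const_mx 1) = 1%:M.
Proof.
rewrite /eigmx.
have -> : Dg (const_mx 1) = 1%:M :> 'M[C]_n.
  by apply/matrixP => i j; rewrite !mxE; case: eqP.
by rewrite mulmx1 PadjP.
Qed.

Lemma eigmx0 : eigmx P 0 = 0.
Proof.
rewrite /eigmx.
have -> : Dg (0 : 'rV[R]_n) = 0 by apply/matrixP => i j; rewrite !mxE mul0rn.
by rewrite mulmx0 mul0mx.
Qed.

Lemma eigmxZB (c : R) f g : eigmx P (c *: f - g) = c%:C *: eigmx P f - eigmx P g.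
Proof.
rewrite /eigmx.
have -> : Dg (c *: f - g) = c%:C *: Dg f - Dg g.
  apply/matrixP => i j; rewrite !mxE rmorphB rmorphM /=.
  by case: (i == j); rewrite /= ?mulr1n ?mulr0n ?mulr0 ?subr0.
by rewrite mulmxBr mulmxBl -scalemxAr -scalemxAl.
Qed.

Lemma eigmxM f g : eigmx P f *m eigmx P g = eigmx P (\row_j (f 0 j * g 0 j)).
Proof.
rewrite /eigmx !mulmxA -(mulmxA _ P) PPadj mulmx1 -(mulmxA _ (Dg f)) /Dg mulmx_diag.
by congr (_ *m diag_mx _ *m _); apply/matrixP => i j; rewrite !mxE rmorphM.
Qed.

Lemma qf_eigmx v g :
  qf v (eigmx P g) = \sum_i (g 0 i)%:C * `|(P *m v) i 0| ^+ 2.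
Proof.
have -> : qf v (eigmx P g) = qf (P *m v) (Dg g) by rewrite /qf /eigmx adjmxM !mulmxA.
rewrite /qf /Dg mul_mx_diag mxE; apply: eq_bigr => i _.
by rewrite !mxE normCK; ring.
Qed.

Lemma psd_eigmx g : (forall i, 0 <= g 0 i) -> psd (eigmx P g).
Proof.
move=> g0; split.
  rewrite /is_herm /eigmx !adjmxM adjmxK mulmxA; congr (_ *m _ *m _).
  by apply/matrixP => i j; rewrite !mxE eq_sym; case: eqVneq => [->|_]; rewrite ?mulr1n ?mulr0n ?conj_realC ?conjC0.
move=> v; rewrite -/(qf v _) qf_eigmx; apply: sumr_ge0 => i _.
by rewrite mulr_ge0 ?exprn_ge0 // ler0c.
Qed.

Definition eigvec (i : 'I_n) : 'cV[C]_n := adjmx P *m delta_mx i 0.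

Lemma ip_eigvec i : ip (eigvec i) (eigvec i) = 1.
Proof.
rewrite /ip /eigvec adjmxM adjmxK !mulmxA -(mulmxA _ P) PPadj mulmx1.
rewrite mxE (bigD1 i) //= !mxE !eqxx conjC1 mulr1 big1 ?addr0 // => j ji.
by rewrite !mxE (negbTE ji) conjC0 mul0r.
Qed.

Lemma eigmx_eigvec g i : eigmx P g *m eigvec i = (g 0 i)%:C *: eigvec i.
Proof.
rewrite /eigmx /eigvec !mulmxA -(mulmxA _ P) PPadj mulmx1 -mulmxA scalemxAr.
congr (_ *m _); apply/matrixP => r s; rewrite /Dg mul_diag_mx !mxE.
by case: (eqVneq r i) => [->|_]; rewrite ?mulr0 ?andbF ?mulr0n ?mulr0.
Qed.

End FunctionalCalculus.

Lemma vnormE n (v : 'cV[C]_n) : vnorm v = Num.sqrt (complex.Re (ip v v)).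
Proof. by []. Qed.

Lemma vnorm_unit n (u : 'cV[C]_n) : ip u u = 1 -> vnorm u = 1.
Proof. by rewrite vnormE => ->; rewrite sqrtr1. Qed.

Lemma vnorm_le n (v w : 'cV[C]_n) (c : R) :
  0 <= c -> ip w w <= (c ^+ 2)%:C * ip v v -> vnorm w <= c * vnorm v.
Proof.
have Re_ge0 (z : C) : 0 <= z -> 0 <= complex.Re z by rewrite lecE => /andP[].
have Re_mulC (x : R) (z : C) : complex.Re (x%:C * z) = x * complex.Re z.
  by case: z => a b /=; rewrite mul0r subr0.
move=> c0; rewrite lecE Re_mulC => /andP[_ le_Re].
rewrite !vnormE -[c]ger0_norm // -sqrtr_sqr -sqrtrM ?sqr_ge0 //.
by rewrite ler_sqrt // mulr_ge0 ?sqr_ge0 // Re_ge0 // ip_ge0.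
Qed.

Lemma opnorm_attained n (X : 'M[C]_n) (u : 'cV[C]_n) (m : R) :
  vnorm u = 1 -> vnorm (X *m u) = m ->
  (forall v, vnorm v = 1 -> vnorm (X *m v) <= m) -> opnorm X = m.
Proof.
move=> u1 Xu bound; rewrite /opnorm.
set E := [set _ | _ in _]%classic.
have Em : E m by exists u.
have ubE : ubound E m by move=> _ [v /= v1 <-]; exact: bound.
by apply: le_anti; rewrite ge_sup //=; [rewrite ub_le_sup //; exists m | exists m].
Qed.

Lemma opnorm_eigen n (X : 'M[C]_n) (u : 'cV[C]_n) (m : R) :
  0 <= m -> is_herm X -> ip u u = 1 -> X *m u = m%:C *: u ->
  psd ((m ^+ 2)%:C *: 1%:M - X *m X) -> opnorm X = m.
Proof.
move=> m0 hX u1 Xu [_ sq_le]; apply: (opnorm_attained (vnorm_unit u1)).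
  rewrite vnormE Xu ipZl ipZr conj_realC u1 mulr1 -rmorphM /=.
  by rewrite -expr2 sqrtr_sqr ger0_norm.
move=> v v1; rewrite -[m]mulr1 -v1; apply: vnorm_le => //.
have := sq_le v; rewrite -/(qf v _) qfB qfZ qf1 qf_ip ipM hX mulmxA.
by rewrite subr_ge0.
Qed.

(* The top eigenpair of a nonzero positive semidefinite matrix X: its largest
   eigenvalue m > 0, which is the operator norm of X, a unit eigenvector for
   it, and the spectral inequality m X - X^2 >= 0 (all eigenvalues lie in
   [0, m]). *)
Lemma psd_top_eigen n (X : 'M[C]_n) : psd X -> X != 0 ->
  exists (m : R) (u : 'cV[C]_n),
    [/\ 0 < m, opnorm X = m, ip u u = 1, X *m u = m%:C *: u &
        psd (m%:C *: X - X *m X)].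
Proof.
move=> psdX X0; have [P [g [PPadj PadjP XE]]] := herm_eigmx psdX.1.
have g0 i : 0 <= g 0 i.
  have := psdX.2 (eigvec P i); rewrite -/(qf _ _) qf_ip XE eigmx_eigvec //.
  by rewrite ipZr ip_eigvec // mulr1 ler0c.
have [i1 _] : exists i1 : 'I_n, true.
  case: n X P g XE X0 {psdX PPadj PadjP g0} => [|n'] X P g XE X0; last by exists ord0.
  by rewrite (flatmx0 X) eqxx in X0.
have [i0 _ g_max] := @arg_maxP _ _ 'I_n i1 xpredT (fun i => g 0 i) isT.
have g_le i : g 0 i <= g 0 i0 := g_max i isT.
set m := g 0 i0 in g_le.
have m_pos : 0 < m.
  rewrite lt0r g0 andbT; apply: contra X0 => /eqP m0.
  suff g_eq0 : g = 0 by rewrite XE g_eq0 eigmx0.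
  by apply/matrixP => i j; rewrite ord1 !mxE; apply/le_anti; rewrite g0 -m0 g_le.
have XX : X *m X = eigmx P (\row_j (g 0 j * g 0 j)) by rewrite XE eigmxM.
have u1 := ip_eigvec PPadj i0.
have Xu : X *m eigvec P i0 = m%:C *: eigvec P i0 by rewrite XE eigmx_eigvec.
exists m, (eigvec P i0); split => //.
- apply: opnorm_eigen (ltW m_pos) psdX.1 u1 Xu _.
  rewrite XX -{1}(eigmx1 PadjP) -eigmxZB; apply: psd_eigmx => i.
  rewrite !mxE mulr1 subr_ge0 expr2.
  by apply: ler_pM.
- rewrite XX {1}XE -eigmxZB; apply: psd_eigmx => i.
  by rewrite !mxE -mulrBl mulr_ge0 ?subr_ge0 ?g0 ?g_le.
Qed.

(* If B_+, B_- >= 0 are orthogonal with a B_+ - B_+^2 >= 0 and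
   b B_- - B_-^2 >= 0, then 1 - B_+/a - B_-/b >= 0: with x = B_+ v and
   y = B_- v, the form at v is ||v - x/a - y/b||^2 plus nonnegative terms. *)
Lemma psd_complement k (Bp Bm : 'M[C]_k) (a b : C) :
  psd Bp -> psd Bm -> Bp *m Bm = 0 -> 0 < a -> 0 < b ->
  psd (a *: Bp - Bp *m Bp) -> psd (b *: Bm - Bm *m Bm) ->
  psd (1%:M - a^-1 *: Bp - b^-1 *: Bm).
Proof.
move=> [hBp _] [hBm _] BpBm a0 b0 [_ qa] [_ qb].
have BmBp := herm_mul_eq0C hBp hBm BpBm.
have ca : Num.conj a^-1 = a^-1 by rewrite conj_ge0 // invr_ge0 ltW.
have cb : Num.conj b^-1 = b^-1 by rewrite conj_ge0 // invr_ge0 ltW.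
split; first by rewrite /is_herm !adjmxB adjmx1 !adjmxZ hBp hBm ca cb.
move=> v; rewrite -/(qf v _) !qfB !qfZ qf1 !qf_ip.
set x := Bp *m v; set y := Bm *m v.
have hx : 0 <= a * ip v x - ip x x.
  by have := qa v; rewrite -/(qf v _) qfB qfZ !qf_ip ipM hBp -mulmxA.
have hy : 0 <= b * ip v y - ip y y.
  by have := qb v; rewrite -/(qf v _) qfB qfZ !qf_ip ipM hBm -mulmxA.
have xy : ip x y = 0 by rewrite /x ipM hBp /y mulmxA BpBm mul0mx ip0r.
have yx : ip y x = 0 by rewrite /y ipM hBm /x mulmxA BmBp mul0mx ip0r.
have xv : ip x v = ip v x by rewrite /x ipM hBp.
have yv : ip y v = ip v y by rewrite /y ipM hBm.
pose w := v - a^-1 *: x - b^-1 *: y.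
have -> : ip v v - a^-1 * ip v x - b^-1 * ip v y =
   ip w w + a^-1 ^+ 2 * (a * ip v x - ip x x) + b^-1 ^+ 2 * (b * ip v y - ip y y).
  rewrite /w !ipBl !ipBr !ipZl !ipZr ca cb xy yx xv yv.
  by field; rewrite !gt_eqF.
by rewrite !addr_ge0 ?ip_ge0 // mulr_ge0 // exprn_ge0 // invr_ge0 ltW.
Qed.

Lemma pos_unital_measure_prepare n k (u w : 'cV[C]_n) (M N : 'M[C]_k) :
  ip u u = 1 -> ip w w = 1 -> psd M -> psd N -> M + N = 1%:M ->
  pos_unital_linear (fun X => qf u X *: M + qf w X *: N).
Proof.
move=> u1 w1 psdM psdN MN; split.
- move=> X hX; rewrite /is_herm adjmxD !adjmxZ !conj_qf hX.
  by rewrite psdM.1 psdN.1.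
- by move=> X Y _ _; rewrite !qfD !scalerDl addrACA.
- by move=> c X _; rewrite !qfZ -!scalerA -scalerDr.
- by move=> X [_ pX]; apply: psdD; apply: psdZ => //; apply: pX.
- by rewrite !qf1 u1 w1 !scale1r.
Qed.

Lemma mul_eigvec_eq0 n (X Y : 'M[C]_n) (u : 'cV[C]_n) (c : C) :
  c != 0 -> Y *m X = 0 -> X *m u = c *: u -> Y *m u = 0.
Proof.
move=> c0 YX Xu; have : c *: (Y *m u) = 0 by rewrite scalemxAr -Xu mulmxA YX mul0mx.
by move/eqP; rewrite scaler_eq0 (negbTE c0) => /eqP.
Qed.

Lemma transfer_parts n k (Ap Am : 'M[C]_n) (Bp Bm : 'M[C]_k) :
  psd Ap -> psd Am -> Ap *m Am = 0 -> Ap != 0 -> Am != 0 ->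
  psd Bp -> psd Bm -> Bp *m Bm = 0 -> Bp != 0 -> Bm != 0 ->
  opnorm Ap = opnorm Bp -> opnorm Am = opnorm Bm ->
  exists Phi : 'M[C]_n -> 'M[C]_k, pos_unital_linear Phi /\ Phi (Ap - Am) = Bp - Bm.
Proof.
move=> pAp pAm ApAm Ap0 Am0 pBp pBm BpBm Bp0 Bm0 Np Nm.
have [ap [up [ap0 apE up1 Apu _]]] := psd_top_eigen pAp Ap0.
have [am [um [am0 amE um1 Amu _]]] := psd_top_eigen pAm Am0.
have [bp [_ [_ bpE _ _ qBp]]] := psd_top_eigen pBp Bp0.
have [bm [_ [_ bmE _ _ qBm]]] := psd_top_eigen pBm Bm0.
have ebp : bp = ap by rewrite -bpE -Np apE.
have ebm : bm = am by rewrite -bmE -Nm amE.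
rewrite {}ebp in qBp; rewrite {}ebm in qBm.
set a := ap%:C in Apu qBp; set b := am%:C in Amu qBm.
have a0 : 0 < a by rewrite ltcR.
have b0 : 0 < b by rewrite ltcR.
have Amup : Am *m up = 0.
  by apply: mul_eigvec_eq0 (lt0r_neq0 a0) _ Apu; apply: herm_mul_eq0C pAp.1 pAm.1 ApAm.
have Apum : Ap *m um = 0 by apply: mul_eigvec_eq0 (lt0r_neq0 b0) ApAm Amu.
have qpA : qf up (Ap - Am) = a by rewrite qfB !qf_ip Apu Amup ipZr up1 ip0r mulr1 subr0.
have qmA : qf um (Ap - Am) = - b by rewrite qfB !qf_ip Amu Apum ipZr um1 ip0r mulr1 sub0r.
have pT := psd_complement pBp pBm BpBm a0 b0 qBp qBm.
set T := 1%:M - a^-1 *: Bp - b^-1 *: Bm in pT.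
have TE : T = 1%:M - a^-1 *: Bp - b^-1 *: Bm by [].
clearbody T.
have ab0 : 0 < a + b by rewrite addr_gt0.
pose Mp := a^-1 *: Bp + (b / (a + b)) *: T.
pose Mm := b^-1 *: Bm + (a / (a + b)) *: T.
have pMp : psd Mp by apply: psdD; apply: psdZ; rewrite ?divr_ge0 ?invr_ge0 ?ltW.
have pMm : psd Mm by apply: psdD; apply: psdZ; rewrite ?divr_ge0 ?invr_ge0 ?ltW.
exists (fun X => qf up X *: Mp + qf um X *: Mm); split.
  apply: pos_unital_measure_prepare => //.
  rewrite addrACA -scalerDl -mulrDl [b + a]addrC divff ?gt_eqF // scale1r.
  by rewrite TE -[1%:M - _ - _]addrA -opprD addrC subrK.
rewrite qpA qmA /Mp /Mm !scalerDr !scalerA addrACA -scalerDl.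
have -> : a * (b / (a + b)) + - b * (a / (a + b)) = 0 by field; rewrite gt_eqF.
by rewrite scale0r addr0 mulfV ?gt_eqF // mulNr mulfV ?gt_eqF // scaleN1r scale1r.
Qed.

Lemma parts_neq0 n (A Ap Am : 'M[C]_n) :
  ~ psd A -> ~ psd (- A) -> A = Ap - Am -> psd Ap -> psd Am -> Ap != 0 /\ Am != 0.
Proof.
move=> nA nA' AE pAp pAm; split; apply/eqP => part0.
  by apply: nA'; rewrite AE part0 sub0r opprK.
by apply: nA; rewrite AE part0 subr0.
Qed.

End PositiveUnitalMaps.

Theorem mainTheorem8 (R : realType) (n k : nat) (A : 'M[R[i]]_n) (B : 'M[R[i]]_k) :
  is_herm A -> is_herm B ->
  ~ psd A -> ~ psd (- A) -> ~ psd B -> ~ psd (- B) ->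
  forall (Ap Am : 'M[R[i]]_n) (Bp Bm : 'M[R[i]]_k),
    psd Ap -> psd Am -> A = Ap - Am -> Ap *m Am = 0 ->
    psd Bp -> psd Bm -> B = Bp - Bm -> Bp *m Bm = 0 ->
    opnorm Ap = opnorm Bp -> opnorm Am = opnorm Bm ->
    (exists Phi : 'M[R[i]]_n -> 'M[R[i]]_k, pos_unital_linear Phi /\ Phi A = B) /\
    (exists Phi' : 'M[R[i]]_k -> 'M[R[i]]_n, pos_unital_linear Phi' /\ Phi' B = A).
Proof.
move=> _ _ nA nA' nB nB' Ap Am Bp Bm pAp pAm AE ApAm pBp pBm BE BpBm Np Nm.
have [Ap0 Am0] := parts_neq0 nA nA' AE pAp pAm.
have [Bp0 Bm0] := parts_neq0 nB nB' BE pBp pBm.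
rewrite AE BE; split.
  exact: transfer_parts.
by apply: transfer_parts.
Qed.
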